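(* Let $(X,\mu)$ be a standard probability space and let $T,U$ be measure-preserving Borel bijections of $(X,\mu)$ with disjoint supports. Suppose there are relatively prime integers $p,q\geq 2$ such that every $T$-orbit is finite with cardinality dividing a power of $p$, and every $U$-orbit is finite with cardinality dividing a power of $q$. Then both $T$ and $U$ belong to the closure, for the uniform topology, of the group generated by $TU$.
   Context: The support of $T$ is $\{x:T(x)\neq x\}$. The uniform topology on the group of measure-preserving bijections of $(X,\mu)$ (identified up to null sets) is given by the metric $d_u(T,U)=\mu(\{x:T(x)\neq U(x)\})$. *)

From HB Require Import structures.
From mathcomp Require Import all_boot all_order all_algebra.
From mathcomp Require Import all_classical all_reals all_analysis.
Set Implicit Arguments. Unset Strict Implicit. Unset Printing Implicit Defensive.
Import Order.TTheory GRing.Theory Num.Theory.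
Local Open Scope classical_set_scope.
Local Open Scope ring_scope.

(* Standard Borel space: Borel-isomorphic to a Borel subset of R
   (Kuratowski: every standard Borel space is such, and conversely). *)
Definition standard_borel (d : measure_display) (X : measurableType d)
    (R : realType) : Prop :=
  exists f : X -> R,
    [/\ injective f, measurable_fun setT f, measurable (range f)
      & forall A : set X, measurable A -> measurable (f @` A)].

Definition mp_bijection (d : measure_display) (X : measurableType d)
    (R : realType) (mu : probability X R) (T : X -> X) : Prop :=
  [/\ bijective T, measurable_fun setT T
    & forall A : set X, measurable A -> mu (T @^-1` A) = mu A].

Definition supp {X : Type} (T : X -> X) : set X := [set x | T x <> x].

(* the (Z-)orbit of x under a bijection T *)
Definition orbit {X : Type} (T : X -> X) (x : X) : set X :=
  [set y | exists n : nat, y = iter n T x \/ x = iter n T y].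

Definition orbits_pfinite {X : Type} (T : X -> X) (p : nat) : Prop :=
  forall x, exists k m : nat, (orbit T x #= `I_k)%card /\ (k %| p ^ m)%N.

(* the cyclic group generated by f : its elements f^n and f^{-n}
   (the latter characterized as the W with W o f^n = id) *)
Definition cyclic_gen {X : Type} (f : X -> X) : set (X -> X) :=
  [set W | exists n : nat, W = iter n f \/ W \o iter n f = id].

(* V lies in the closure of the set S of transformations for the
   uniform metric d_u(V,W) = mu {x | V x <> W x} *)
Definition in_uniform_closure (d : measure_display) (X : measurableType d)
    (R : realType) (mu : probability X R) (S : set (X -> X)) (V : X -> X) :=
  forall e : R, 0 < e ->
    exists W, S W /\ (mu [set x | V x <> W x] < e%:E)%E.

From Pilot Require Import Defs.
From HB Require Import structures.
From mathcomp Require Import all_boot all_order all_algebra.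
From mathcomp Require Import all_classical all_reals all_analysis.
Set Implicit Arguments. Unset Strict Implicit.
Import Order.TTheory GRing.Theory Num.Theory.
Local Open Scope classical_set_scope.
Local Open Scope ring_scope.

(* Let F_M be the set of points fixed by both T^(p^M) and U^(q^M).  Since the
   supports are disjoint, T U acts as T on supp T and as U off it, so for
   n = 1 mod p^M and n = 0 mod q^M (Chinese remainder theorem) the power
   (T U)^n agrees with T on F_M, and symmetrically for U.  The orbit
   hypotheses make the F_M an increasing exhaustion of X, so mu (X \ F_M)
   tends to 0 by continuity of the probability from above. *)

Section Iterates.
Variables (X : Type) (f : X -> X).

Lemma iter_fix_mul x N k : iter N f x = x -> iter (k * N) f x = x.
Proof. by move=> fx; rewrite iterM; elim: k => //= k ->. Qed.

Lemma iter_fix_dvdn x N a : (N %| a)%N -> iter N f x = x -> iter a f x = x.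
Proof. by move=> /dvdnP[k ->]; apply: iter_fix_mul. Qed.

Lemma iter_modn x N a : iter N f x = x -> iter a f x = iter (a %% N) f x.
Proof. by move=> fx; rewrite {1}(divn_eq a N) addnC iterD iter_fix_mul. Qed.

Hypothesis f_inj : injective f.

Lemma iter_inj n : injective (iter n f).
Proof. by elim: n => [//|n IH] a b /= /f_inj /IH. Qed.

Lemma iter_fix_subn x i j :
  (i <= j)%N -> iter i f x = iter j f x -> iter (j - i) f x = x.
Proof.
by move=> ij fij; apply: (iter_inj (n:=i)); rewrite -iterD addnC subnK.
Qed.

Lemma iter_injective_below x l :
  (forall j, (0 < j < l)%N -> iter j f x <> x) ->
  {in `I_l &, injective (fun r => iter r f x)}.
Proof.
move=> aperiodic i j; rewrite !inE /= => il jl fij.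
have no_repeat a b : (a < b)%N -> (b < l)%N -> iter a f x <> iter b f x.
  move=> ab bl fab; apply: (aperiodic (b - a)%N).
    by rewrite subn_gt0 ab (leq_ltn_trans (leq_subr a b)).
  exact: iter_fix_subn (ltnW ab) fab.
case: (ltngtP i j) => // [ij|ji]; exfalso.
  exact: no_repeat ij jl fij.
exact: no_repeat ji il (esym fij).
Qed.

Lemma orbit_periodic x l :
  (0 < l)%N -> iter l f x = x ->
  Defs.orbit f x = (fun r => iter r f x) @` `I_l.
Proof.
move=> l_gt0 fx; apply/seteqP; split => y.
  2: by case=> r _ <-; exists r; left.
case=> n [->|xE].
  by exists (n %% l)%N; [rewrite /= ltn_pmod|rewrite -iter_modn].
have fy : iter l f y = y.
  by apply: (iter_inj (n:=n)); rewrite -!iterD addnC iterD -xE fx.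
(* y = f^(l n) y = f^((l - 1) n) x *)
exists (((l - 1) * n) %% l)%N; first by rewrite /= ltn_pmod.
rewrite -iter_modn // xE -iterD -mulSnr subn1 prednK // mulnC.
exact: iter_fix_mul.
Qed.

Lemma card_orbit_periodic x k :
  (Defs.orbit f x #= `I_k)%card -> exists2 j, (0 < j)%N & iter j f x = x.
Proof.
move=> card_orb; apply: contrapT => aperiodic.
have inj : {in `I_k.+1 &, injective (fun r => iter r f x)}.
  apply: iter_injective_below => j /andP[j_gt0 _] fj.
  by apply: aperiodic; exists j.
have img_sub : (fun r => iter r f x) @` `I_k.+1 `<=` Defs.orbit f x.
  by move=> y [r _ <-]; exists r; left.
suff : (`I_k.+1 #<= `I_k)%card by rewrite card_le_II ltnn.
apply: card_le_trans (card_le_trans (subset_card_le img_sub) _).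
  by rewrite -(card_le_eql (inj_card_eq inj)) card_lexx.
by rewrite (card_le_eql card_orb) card_lexx.
Qed.

Lemma iter_card_orbit x k : (Defs.orbit f x #= `I_k)%card -> iter k f x = x.
Proof.
move=> card_orb; have [j j_gt0 fj] := card_orbit_periodic card_orb.
have exP : exists j, (0 < j)%N && `[< iter j f x = x >].
  by exists j; rewrite j_gt0; apply/asboolP.
case: (ex_minnP exP) => l /andP[l_gt0 /asboolP fl] l_min.
have inj : {in `I_l &, injective (fun r => iter r f x)}.
  apply: iter_injective_below => i /andP[i_gt0 il] fi.
  by move: (l_min i); rewrite i_gt0 leqNgt il => /(_ (asboolT fi)).
have /card_eq_II <- // : (`I_l #= `I_k)%card.
apply: card_eq_trans card_orb.
by rewrite (orbit_periodic l_gt0 fl) card_eq_sym; exact: inj_card_eq.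
Qed.

Lemma orbits_pfinite_iter_fix p x : orbits_pfinite f p ->
  exists m, forall M, (m <= M)%N -> iter (p ^ M) f x = x.
Proof.
move=> /(_ x)[k [m [card_orb k_dvd]]]; exists m => M mM.
apply: iter_fix_dvdn (iter_card_orbit card_orb).
exact: dvdn_trans k_dvd (dvdn_exp2l p mM).
Qed.

End Iterates.

Section DisjointSupports.
Variables (X : Type) (T U : X -> X).
Hypotheses (T_inj : injective T) (U_inj : injective U)
  (supp_disj : supp T `&` supp U = set0).

Lemma suppT_fixU x : T x <> x -> U x = x.
Proof.
move=> Tx; apply: contrapT => Ux.
by have : (supp T `&` supp U) x by []; rewrite supp_disj.
Qed.

Lemma suppU_fixT x : U x <> x -> T x = x.
Proof. by move=> Ux; apply: contrapT => /suppT_fixU. Qed.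

Lemma iter_comp_suppT x n : T x <> x -> iter n (T \o U) x = iter n T x.
Proof.
move=> Tx; have suppT_iter m : T (iter m T x) <> iter m T x.
  by elim: m => //= m IH /T_inj.
by elim: n => //= n ->; rewrite suppT_fixU.
Qed.

Lemma iter_comp_fixT x n : T x = x -> iter n (T \o U) x = iter n U x.
Proof.
move=> Tx; have fixT_iter m : T (iter m U x) = iter m U x.
  elim: m => //= m IH.
  have [->//|Uy] := pselect (U (iter m U x) = iter m U x).
  by apply: suppU_fixT => /U_inj.
by elim: n => //= n ->; rewrite -[U _]/(iter n.+1 U x) fixT_iter.
Qed.

Lemma iter_comp_chineseT a b x : coprime a b ->
  iter a T x = x -> iter b U x = x -> iter (chinese a b 1 0) (T \o U) x = T x.
Proof.
move=> cab Tax Ubx; have [Tx|Tx] := pselect (T x = x).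
  by rewrite iter_comp_fixT // (iter_modn _ Ubx) chinese_modr // mod0n.
rewrite iter_comp_suppT // (iter_modn _ Tax) chinese_modl //.
by rewrite -(iter_modn 1 Tax).
Qed.

Lemma iter_comp_chineseU a b x : coprime a b ->
  iter a T x = x -> iter b U x = x -> iter (chinese a b 0 1) (T \o U) x = U x.
Proof.
move=> cab Tax Ubx; have [Tx|Tx] := pselect (T x = x).
  rewrite iter_comp_fixT // (iter_modn _ Ubx) chinese_modr //.
  by rewrite -(iter_modn 1 Ubx).
rewrite iter_comp_suppT // (iter_modn _ Tax) chinese_modl //.
by rewrite mod0n suppT_fixU.
Qed.

End DisjointSupports.

Lemma measurable_iter d (X : measurableType d) (f : X -> X) n :
  measurable_fun setT f -> measurable_fun setT (iter n f).
Proof.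
move=> mf; elim: n => [|n IH]; first exact: measurable_id.
exact: measurableT_comp mf IH.
Qed.

Lemma standard_borel_measurable_eq d (X : measurableType d) (R : realType)
    (g h : X -> X) : standard_borel X R ->
  measurable_fun setT g -> measurable_fun setT h ->
  measurable [set x | g x = h x].
Proof.
move=> [f [f_inj mf _ _]] mg mh.
have mfgh : measurable_fun setT ((f \o g) \- (f \o h)).
  by apply: measurable_realfun.measurable_funB; apply: measurableT_comp.
suff -> : [set x | g x = h x] = setT `&` ((f \o g) \- (f \o h)) @^-1` [set 0].
  exact: mfgh.
apply/seteqP; split => x /=; first by move=> ->; rewrite subrr.
by move=> [_ /eqP]; rewrite subr_eq0 => /eqP /f_inj.
Qed.

Lemma probability_compl_cover_lt d (X : measurableType d) (R : realType)
    (mu : probability X R) (F : nat -> set X) :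
  (forall n, measurable (F n)) -> (forall n m, (n <= m)%N -> F n `<=` F m) ->
  \bigcup_n F n = setT ->
  forall e : R, 0 < e -> exists n, (mu (~` F n) < e%:E)%E.
Proof.
move=> mF F_nondecr F_cover e e_gt0.
have : (mu \o (fun n => ~` F n)) @ \oo --> mu (\bigcap_n ~` F n).
  apply: nonincreasing_cvg_mu.
  - by rewrite (le_lt_trans (probability_le1 _ _)) ?ltry //; apply: measurableC.
  - by move=> n; apply: measurableC.
  - by apply: bigcap_measurable => [|n _]; [exists 0%N|apply: measurableC].
  - by move=> n m nm; apply/subsetPset; apply: subsetC; apply: F_nondecr.
rewrite -setC_bigcup F_cover setCT measure0 => cvg0.
have near0 : nbhs (0 : R)%:E [set y : \bar R | (y < e%:E)%E].
  by apply/nbhs_EFin; apply: lt_nbhsl; rewrite e_gt0.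
have := cvg0 _ near0; rewrite /= => -[N _ ltN].
by exists N; apply: (ltN N (leqnn N)).
Qed.

Lemma in_uniform_closure_cover d (X : measurableType d) (R : realType)
    (mu : probability X R) (S : set (X -> X)) (V : X -> X) (F : nat -> set X) :
  (forall n, measurable (F n)) -> (forall n m, (n <= m)%N -> F n `<=` F m) ->
  \bigcup_n F n = setT ->
  (forall n, exists W, [/\ S W, measurable [set x | V x <> W x]
                         & forall x, F n x -> V x = W x]) ->
  in_uniform_closure mu S V.
Proof.
move=> mF F_nondecr F_cover approx e e_gt0.
have [n mu_lt] := probability_compl_cover_lt mu mF F_nondecr F_cover e_gt0.
have [W [SW mVW VW]] := approx n; exists W; split => //.
apply: le_lt_trans mu_lt; apply: le_measure; rewrite ?inE //.
  exact: measurableC.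
by move=> x VWx Fx; apply: VWx; apply: VW.
Qed.

Theorem lemma6p1 (d : measure_display) (X : measurableType d) (R : realType)
  (mu : probability X R) (T U : X -> X) (p q : nat) :
  standard_borel X R ->
  mp_bijection mu T -> mp_bijection mu U ->
  supp T `&` supp U = set0 ->
  (2 <= p)%N -> (2 <= q)%N -> coprime p q ->
  orbits_pfinite T p -> orbits_pfinite U q ->
  in_uniform_closure mu (cyclic_gen (T \o U)) T /\
  in_uniform_closure mu (cyclic_gen (T \o U)) U.
Proof.
move=> sbX [/bij_inj T_inj mT _] [/bij_inj U_inj mU _] disj _ _ cpq oT oU.
pose F M := [set x | iter (p ^ M) T x = x] `&` [set x | iter (q ^ M) U x = x].
have mF M : measurable (F M).
  apply: measurableI; apply: (standard_borel_measurable_eq (h := id) sbX);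
    by [apply: measurable_iter | exact: measurable_id].
have F_nondecr M N : (M <= N)%N -> F M `<=` F N.
  by move=> MN x [Tx Ux]; split;
    [apply: iter_fix_dvdn Tx|apply: iter_fix_dvdn Ux]; apply: dvdn_exp2l.
have F_cover : \bigcup_M F M = setT.
  apply/seteqP; split => // x _.
  have [m1 Tx] := orbits_pfinite_iter_fix T_inj x oT.
  have [m2 Ux] := orbits_pfinite_iter_fix U_inj x oU.
  by exists (maxn m1 m2) => //; split; [apply: Tx|apply: Ux];
    rewrite ?leq_maxl ?leq_maxr.
have cop M : coprime (p ^ M) (q ^ M) by rewrite coprimeXl // coprimeXr.
have mTU n : measurable_fun setT (iter n (T \o U)).
  by apply: measurable_iter; apply: measurableT_comp.
split; apply: (in_uniform_closure_cover mu mF F_nondecr F_cover) => M.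
- exists (iter (chinese (p ^ M) (q ^ M) 1 0) (T \o U)); split.
  + by exists (chinese (p ^ M) (q ^ M) 1 0); left.
  + exact/measurableC/(standard_borel_measurable_eq sbX mT (mTU _)).
  + move=> x [Tx Ux].
    by rewrite (iter_comp_chineseT T_inj U_inj disj (cop M)).
- exists (iter (chinese (p ^ M) (q ^ M) 0 1) (T \o U)); split.
  + by exists (chinese (p ^ M) (q ^ M) 0 1); left.
  + exact/measurableC/(standard_borel_measurable_eq sbX mU (mTU _)).
  + move=> x [Tx Ux].
    by rewrite (iter_comp_chineseU T_inj U_inj disj (cop M)).
Qed.
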